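(* For each positive integer $k$, let $z^{m}_k$ be the optimal value of the linear program \[ \max \sum_{j=1}^k\alpha_j \ \text{ s.t. } f+\sum_{j=1}^k d_j\le 1;\ \alpha_j\le\alpha_{j+1}\ (1\le j<k);\ \alpha_j\le\alpha_l+d_j+d_l\ (1\le j,l\le k);\ x_{jl}\ge\alpha_j-d_l\ (1\le j\le l\le k);\ \sum_{l=j}^k x_{jl}\le f\ (1\le j\le k);\ \alpha_j,d_j,f,x_{jl}\ge0, \] and let $x^{m}_k$ be the optimal value of the linear program obtained from it by imposing the constraint $x_{jl}\ge\alpha_j-d_l$ only for $1\le j<l\le k$ (the variables $x_{jj}$ still appear in $\sum_{l=j}^k x_{jl}\le f$ and are only required to be non-negative). Then $\sup_{k \ge 1} z^{m}_k = \inf_{k\ge1} x^{m}_k$. *)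

From HB Require Import structures.
From mathcomp Require Import all_boot all_order all_algebra.
From mathcomp Require Import boolp classical_sets reals constructive_ereal ereal.
Set Implicit Arguments. Unset Strict Implicit. Unset Printing Implicit Defensive.
Import Order.TTheory GRing.Theory Num.Theory.
Local Open Scope ring_scope.
Local Open Scope classical_set_scope.

(* Indices 1..k of the paper are the ordinals 0..k-1 of 'I_k.
   [diag = true]  : constraint x_jl >= alpha_j - d_l for j <= l (program z^m_k)
   [diag = false] : constraint x_jl >= alpha_j - d_l for j <  l (program x^m_k).
   Variables x_jl with j > l are not part of the program; they appear in no
   constraint nor in the objective. *)
Definition lp_feasible (R : realType) (k : nat) (diag : bool)
  (alpha d : 'I_k -> R) (f : R) (x : 'I_k -> 'I_k -> R) : Prop :=
  [/\ f + \sum_(j < k) d j <= 1,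
      (forall j l : 'I_k, val l = (val j).+1 -> alpha j <= alpha l),
      (forall j l : 'I_k, alpha j <= alpha l + d j + d l) &
      (forall j l : 'I_k, (if diag then (j <= l)%N else (j < l)%N) ->
                          alpha j - d l <= x j l)] /\
  [/\ (forall j : 'I_k, \sum_(l < k | (j <= l)%N) x j l <= f),
      (forall j, 0 <= alpha j), (forall j, 0 <= d j), 0 <= f &
      (forall j l : 'I_k, (j <= l)%N -> 0 <= x j l)].

Definition lp_value (R : realType) (k : nat) (diag : bool) : \bar R :=
  ereal_sup [set r : \bar R | exists alpha d f x,
     @lp_feasible R k diag alpha d f x /\ r = (\sum_(j < k) alpha j)%:E].

Definition zm (R : realType) (k : nat) : \bar R := lp_value R k true.
Definition xm (R : realType) (k : nat) : \bar R := lp_value R k false.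

From HB Require Import structures.
From mathcomp Require Import all_boot all_order all_algebra.
From mathcomp Require Import boolp classical_sets reals constructive_ereal ereal.
From mathcomp Require Import ring lra zify.
Set Implicit Arguments. Unset Strict Implicit. Unset Printing Implicit Defensive.
Import Order.TTheory GRing.Theory Num.Theory.
Local Open Scope ring_scope.

(* Replicating every index of a solution of the z-program m times (scaling
   alpha, d and x by 1/m) and then merging consecutive groups of k indices
   turns a z-solution of size k into an x-solution of size m with the same
   objective, so z^m_k <= x^m_m for all k, m.
   Conversely, in an x-solution of size 2n the constraints x_jl >= alpha_j - d_l
   with l in the second half give n alpha_j <= f + sum d for j in the first
   half; averaging alpha_j <= alpha_l + d_j + d_l over l in the first half
   bounds every alpha_j - d_j by some c with n c <= 2 (f + sum d).  Taking
   x_jj := c, raising f to f + c and rescaling by n / (n + 2) gives a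
   z-solution, so x^m_2n <= (n + 2) / n sup z^m, and sup z^m is finite since
   x^m_2 <= 5. *)

Section OrdBlocks.
Variables m b : nat.

Lemma ord_block_subproof (J : 'I_m) (i : 'I_b) : (J * b + i < m * b)%N.
Proof. have := ltn_ord J; have := ltn_ord i; nia. Qed.

Definition ord_block (J : 'I_m) (i : 'I_b) : 'I_(m * b) :=
  Ordinal (ord_block_subproof J i).

Lemma block_subproof (p : 'I_(m * b)) : (p %/ b < m)%N.
Proof.
case: b p => [|b'] p; first by case: p => ?; rewrite muln0.
by rewrite ltn_divLR.
Qed.

Definition block (p : 'I_(m * b)) : 'I_m := Ordinal (block_subproof p).

Lemma ord_blockK (J : 'I_m) (i : 'I_b) : block (ord_block J i) = J.
Proof.
apply: val_inj; rewrite /= divnMDl ?divn_small ?addn0 //.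
exact: leq_ltn_trans (ltn_ord i).
Qed.

Lemma ord_block_inj : injective (fun Ji : 'I_m * 'I_b => ord_block Ji.1 Ji.2).
Proof.
move=> [J i] [L i'] /(congr1 val) /= E.
have b0 : (0 < b)%N by apply: leq_ltn_trans (ltn_ord i).
have EJ : J = L.
  apply: val_inj; move: (congr1 (divn^~ b) E).
  by rewrite !divnMDl // !divn_small ?addn0.
congr pair => //; apply: val_inj; move: (congr1 (modn^~ b) E) => /=.
by rewrite !modnMDl !modn_small.
Qed.

Lemma sum_ord_block (V : nmodType) (F : 'I_(m * b) -> V) :
  \sum_(p < m * b) F p = \sum_(J < m) \sum_(i < b) F (ord_block J i).
Proof.
rewrite pair_big /= (reindex (fun Ji : 'I_m * 'I_b => ord_block Ji.1 Ji.2)) //.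
apply/onW_bij/inj_card_bij; first exact: ord_block_inj.
by rewrite card_prod !card_ord.
Qed.

Lemma sum_block (V : nmodType) (F : 'I_m -> V) :
  \sum_(p < m * b) F (block p) = (\sum_(J < m) F J) *+ b.
Proof.
rewrite sum_ord_block -sumrMnl; apply: eq_bigr => J _.
rewrite (eq_bigr (fun=> F J)) => [|i _]; last by rewrite ord_blockK.
by rewrite sumr_const card_ord.
Qed.

Lemma leq_block (p q : 'I_(m * b)) : (p <= q)%N -> (block p <= block q)%N.
Proof. exact: leq_div2r. Qed.

Lemma ltn_ord_block (J L : 'I_m) (i i' : 'I_b) :
  (J < L)%N -> (ord_block J i < ord_block L i')%N.
Proof. by move=> JL /=; have := ltn_ord i; nia. Qed.

Lemma leq_ord_block (J L : 'I_m) (i : 'I_b) :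
  (J <= L)%N -> (ord_block J i <= ord_block L i)%N.
Proof. by move=> JL /=; nia. Qed.

End OrdBlocks.

Lemma sum_block_div (R : numFieldType) (m b : nat) (F : 'I_m -> R) :
  (0 < b)%N -> \sum_(p < m * b) F (block p) / b%:R = \sum_(J < m) F J.
Proof.
move=> b0; rewrite -mulr_suml sum_block -[_ *+ b]mulr_natr.
by rewrite mulfK // pnatr_eq0 -lt0n.
Qed.

Lemma homo_ord_succ d (T : porderType d) (k : nat) (a : 'I_k -> T) :
  (forall j l : 'I_k, val l = (val j).+1 -> (a j <= a l)%O) ->
  forall j l : 'I_k, (j <= l)%N -> (a j <= a l)%O.
Proof.
move=> a_succ.
suff S n (j l : 'I_k) : val l = (val j + n)%N -> (a j <= a l)%O.
  by move=> j l jl; apply: (S (l - j)%N); rewrite subnKC.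
elim: n j l => [|n IH] j l E; first by rewrite addn0 in E; rewrite (val_inj E).
have lt : (val j + n < k)%N by move: (ltn_ord l); rewrite E addnS; apply: ltnW.
by apply: le_trans (IH j (Ordinal lt) erefl) (a_succ _ _ _); rewrite /= E addnS.
Qed.

Lemma lp_feasible_replicate (R : realType) (k m : nat) (a d : 'I_k -> R) f x :
  (0 < m)%N -> @lp_feasible R k true a d f x ->
  exists a' d' f' x', @lp_feasible R (k * m) true a' d' f' x' /\
    \sum_j a' j = \sum_j a j.
Proof.
move=> m0 [[budget a_succ a_tri a_x] [rows a0 d0 f0 x0]].
have minv0 : 0 <= m%:R^-1 :> R by rewrite invr_ge0 ler0n.
have a_mono := homo_ord_succ a_succ.
exists (fun p => a (block p) / m%:R), (fun p => d (block p) / m%:R), f,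
  (fun p q => x (block p) (block q) / m%:R).
split; last exact: sum_block_div.
split; split => //.
- by rewrite sum_block_div.
- by move=> p q pq; rewrite ler_wpM2r // a_mono // leq_block // pq.
- by move=> p q; rewrite -!mulrDl ler_wpM2r.
- by move=> p q pq; rewrite -mulrBl ler_wpM2r // a_x // leq_block.
- move=> p; apply: le_trans (rows (block p)).
  rewrite big_mkcond [X in _ <= X]big_mkcond.
  rewrite -[X in _ <= X](sum_block_div _ m0) /=.
  apply: ler_sum => q _; case: ifP => pq; first by rewrite (leq_block pq).
  by case: ifP => // bpq; rewrite mulr_ge0 // x0.
- by move=> p; rewrite mulr_ge0.
- by move=> p; rewrite mulr_ge0.
- by move=> p q pq; rewrite mulr_ge0 // x0 // leq_block.
Qed.

Lemma lp_feasible_aggregate (R : realType) (m b : nat) (diag : bool)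
    (a d : 'I_(m * b) -> R) f x :
  (0 < b)%N -> @lp_feasible R (m * b) diag a d f x ->
  exists a' d' f' x', @lp_feasible R m false a' d' f' x' /\
    \sum_J a' J = \sum_p a p.
Proof.
move=> b0 [[budget a_succ a_tri a_x] [rows a0 d0 f0 x0]].
have binv0 : 0 <= b%:R^-1 :> R by rewrite invr_ge0 ler0n.
have a_mono := homo_ord_succ a_succ.
have a_x_lt (p q : 'I_(m * b)) : (p < q)%N -> a p - d q <= x p q.
  by move=> pq; apply: a_x; case: diag => //; exact: ltnW.
pose blk (F : 'I_(m * b) -> R) J := \sum_(i < b) F (ord_block J i).
pose x' (J L : 'I_m) := if (J < L)%N
  then b%:R^-1 * \sum_(i < b) \sum_(i' < b) x (ord_block J i) (ord_block L i')
  else 0.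
exists (blk a), (blk d), f, x'.
split; last by rewrite [RHS]sum_ord_block.
split; split => //.
- by move: budget; rewrite sum_ord_block.
- move=> J L JL; apply: ler_sum => i _.
  by apply: a_mono; apply: leq_ord_block; rewrite JL.
- by move=> J L; rewrite /blk -!big_split /=; apply: ler_sum => i _.
- move=> J L JL; rewrite /x' JL.
  have -> : blk a J - blk d L = b%:R^-1 *
      \sum_(i < b) \sum_(i' < b) (a (ord_block J i) - d (ord_block L i')).
    rewrite (eq_bigr (fun i => a (ord_block J i) *+ b - blk d L)); last first.
      by move=> i _; rewrite sumrB sumr_const card_ord.
    rewrite sumrB sumrMnl sumr_const card_ord -mulrnBl -[(_ - _) *+ b]mulr_natl.
    by rewrite mulKf // pnatr_eq0 -lt0n.
  rewrite ler_wpM2l //; apply: ler_sum => i _; apply: ler_sum => i' _.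
  exact/a_x_lt/ltn_ord_block.
- move=> J.
  pose X (i : 'I_b) (L : 'I_m) (i' : 'I_b) :=
    if (ord_block J i <= ord_block L i')%N
    then x (ord_block J i) (ord_block L i') else 0.
  have X0 i L i' : 0 <= X i L i' by rewrite /X; case: ifP => // ?; apply: x0.
  have x'_le (L : 'I_m) : (if (J <= L)%N then x' J L else 0) <=
      b%:R^-1 * \sum_(i < b) \sum_(i' < b) X i L i'.
    rewrite /x'; case: ltnP => JL; last first.
      by rewrite if_same; apply: mulr_ge0 => //; do 2!apply: sumr_ge0 => ? _.
    rewrite ltnW // ler_wpM2l //; apply: ler_sum => i _; apply: ler_sum => i' _.
    by rewrite /X ltnW // ltn_ord_block.
  have row_le (i : 'I_b) : \sum_(L < m) \sum_(i' < b) X i L i' <= f.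
    rewrite /X -(sum_ord_block (fun q => if (ord_block J i <= q)%N
      then x (ord_block J i) q else 0)) -big_mkcond.
    exact: rows.
  rewrite big_mkcond /=; apply: le_trans (ler_sum _ (fun L _ => x'_le L)) _.
  rewrite -mulr_sumr exchange_big /=.
  apply: le_trans (ler_wpM2l binv0 (ler_sum _ (fun i _ => row_le i))) _.
  by rewrite sumr_const card_ord -[f *+ b]mulr_natl mulKf // pnatr_eq0 -lt0n.
- by move=> J; apply: sumr_ge0 => i _.
- by move=> J; apply: sumr_ge0 => i _.
- move=> J L _; rewrite /x'; case: ifP => // JL.
  apply: mulr_ge0 => //; do 2!apply: sumr_ge0 => ? _.
  exact/x0/ltnW/ltn_ord_block.
Qed.

Lemma lp_feasible_diag_scale (R : realType) (k : nat) (a d : 'I_k -> R)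
    f x c lam :
  @lp_feasible R k false a d f x -> 0 <= c -> (forall j, a j - d j <= c) ->
  0 <= lam -> lam * (f + c + \sum_j d j) <= 1 ->
  @lp_feasible R k true (fun j => lam * a j) (fun j => lam * d j)
    (lam * (f + c)) (fun j l => lam * (if (j < l)%N then x j l else c)).
Proof.
move=> [[_ a_succ a_tri a_x] [rows a0 d0 f0 x0]] c0 a_gap lam0 budget.
have after_j (j : 'I_k) :
    (fun l : 'I_k => (j <= l)%N && (l != j)) =1 (fun l => (j < l)%N).
  by move=> l; rewrite ltn_neqAle andbC eq_sym.
split; split.
- by rewrite -mulr_sumr -mulrDr.
- by move=> j l jl; rewrite ler_wpM2l // a_succ.
- by move=> j l; rewrite -!mulrDr ler_wpM2l.
- move=> j l /= jl; rewrite -mulrBr ler_wpM2l //.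
  case: ltnP => jl'; first exact: a_x.
  by have -> : j = l by apply/val_inj/eqP; rewrite eqn_leq jl jl'.
- move=> j; rewrite (bigD1 j) //= ltnn (eq_bigl _ _ (after_j j)) /=.
  rewrite (eq_bigr (fun l => lam * x j l)) => [|l ->//].
  rewrite -mulr_sumr addrC -mulrDr ler_wpM2l // lerD2r.
  apply: le_trans (rows j).
  rewrite [X in _ <= X](bigD1 j) //= (eq_bigl _ _ (after_j j)) lerDr.
  exact: x0.
- by move=> j; rewrite mulr_ge0.
- by move=> j; rewrite mulr_ge0.
- by rewrite mulr_ge0 // addr_ge0.
- by move=> j l jl; rewrite mulr_ge0 //; case: ifP => // _; apply: x0.
Qed.

Section Halves.
Variables (R : realType) (n : nat) (a d : 'I_(n.+1 + n.+1) -> R) (f : R).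
Variable x : 'I_(n.+1 + n.+1) -> 'I_(n.+1 + n.+1) -> R.
Hypothesis feas : @lp_feasible R (n.+1 + n.+1) false a d f x.

Lemma first_half_le (l : 'I_n.+1) :
  n.+1%:R * a (lshift n.+1 l) <= f + \sum_j d j.
Proof.
have [[_ _ _ a_x] [rows _ d0 _ x0]] := feas.
set p := lshift n.+1 l.
have p_lt (i : 'I_n.+1) : (p < rshift n.+1 i)%N.
  by rewrite /= (leq_trans (ltn_ord l)) ?leq_addr.
have second_half : \sum_(i < n.+1) x p (rshift n.+1 i) <= f.
  apply: le_trans (rows p); rewrite [X in _ <= X]big_mkcond big_split_ord /=.
  rewrite [X in _ <= _ + X](eq_bigr (fun i => x p (rshift n.+1 i))) => [|i _].
    by rewrite lerDr; apply: sumr_ge0 => i _; case: ifP => // ?; apply: x0.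
  by rewrite ltnW ?p_lt.
have d_second : \sum_(i < n.+1) d (rshift n.+1 i) <= \sum_j d j.
  by rewrite [X in _ <= X]big_split_ord lerDr; apply: sumr_ge0.
have : \sum_(i < n.+1) (a p - d (rshift n.+1 i)) <= f.
  apply: le_trans second_half; apply: ler_sum => i _; exact/a_x/p_lt.
by rewrite sumrB sumr_const card_ord -mulr_natl; lra.
Qed.

Lemma lp_feasible_diag_gap : exists c, [/\ 0 <= c, forall j, a j - d j <= c &
  n.+1%:R * c <= 2 * (f + \sum_j d j)].
Proof.
have [[_ _ a_tri _] [_ a0 d0 f0 _]] := feas.
have n1_gt0 : (0 : R) < n.+1%:R by rewrite ltr0n.
pose S := \sum_(l < n.+1) (a (lshift n.+1 l) + d (lshift n.+1 l)).
exists (S / n.+1%:R); split.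
- by rewrite divr_ge0 // /S; apply: sumr_ge0 => l _; rewrite addr_ge0.
- move=> j; rewrite ler_pdivlMr //.
  have -> : (a j - d j) * n.+1%:R = \sum_(l < n.+1) (a j - d j).
    by rewrite sumr_const card_ord mulr_natr.
  by apply: ler_sum => l _; move: (a_tri j (lshift n.+1 l)); lra.
- have a_first : \sum_(l < n.+1) a (lshift n.+1 l) <= f + \sum_j d j.
    rewrite -(ler_pM2l n1_gt0) mulr_sumr.
    apply: le_trans (ler_sum _ (fun l _ => first_half_le l)) _.
    by rewrite sumr_const card_ord mulr_natl.
  have d_first : \sum_(l < n.+1) d (lshift n.+1 l) <= \sum_j d j.
    by rewrite [X in _ <= X]big_split_ord lerDl; apply: sumr_ge0.
  by rewrite mulrC mulfVK ?pnatr_eq0 // /S big_split /=; lra.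
Qed.

Lemma lp_objective_le5 : \sum_j a j <= 5.
Proof.
have [[budget _ _ _] [_ _ d0 f0 _]] := feas.
have [c [c0 a_gap c_le]] := lp_feasible_diag_gap.
have : \sum_j a j <= \sum_j (d j + c).
  by apply: ler_sum => j _; move: (a_gap j); lra.
rewrite big_split /= sumr_const card_ord mulrnDr -[c *+ _]mulr_natl.
have : 0 <= \sum_j d j by apply: sumr_ge0.
lra.
Qed.

Lemma lp_feasible_halves_diag : exists a' d' f' x',
  @lp_feasible R (n.+1 + n.+1) true a' d' f' x' /\
  \sum_j a' j = n.+1%:R / n.+3%:R * \sum_j a j.
Proof.
have [[budget _ _ _] [_ _ d0 f0 _]] := feas.
have [c [c0 a_gap c_le]] := lp_feasible_diag_gap.
set lam := n.+1%:R / n.+3%:R.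
have n3_gt0 : (0 : R) < n.+3%:R by rewrite ltr0n.
have lam0 : 0 <= lam by rewrite divr_ge0.
eexists _, _, _, _; split; last by rewrite mulr_sumr.
apply: lp_feasible_diag_scale feas c0 a_gap lam0 _.
rewrite /lam mulrAC ler_pdivrMr // mul1r.
have -> : (n.+3%:R : R) = n.+1%:R + 2 by rewrite -!natr1; lra.
have : (0 : R) <= n.+1%:R by rewrite ler0n.
set B := f + \sum_j d j in budget c_le *.
rewrite -addrA [c + _]addrC addrA -/B.
nra.
Qed.

End Halves.

Lemma ex_ratio_le_addr (R : archiRealFieldType) (s e : R) : 0 <= s -> 0 < e ->
  exists n : nat, n.+3%:R / n.+1%:R * s <= s + e.
Proof.
move=> s0 e0.
have s2e0 : 0 <= 2 * s / e by rewrite divr_ge0 ?mulr_ge0 ?(ltW e0).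
exists (Num.bound (2 * s / e)); set t := (Num.bound _).+1%:R.
have t_gt0 : 0 < t by rewrite ltr0n.
have t_large : 2 * s < e * t.
  have := archi_boundP s2e0; rewrite ltr_pdivrMr // => /lt_le_trans; apply.
  by rewrite mulrC ler_wpM2l ?(ltW e0) // /t ler_nat.
have -> : (Num.bound (2 * s / e)).+3%:R = t + 2 by rewrite /t -!natr1; ring.
rewrite -(ler_pM2r t_gt0) mulrAC divfK ?gt_eqF //; nra.
Qed.

Local Open Scope ereal_scope.

Lemma zm_le_xm (R : realType) (k m : nat) :
  (0 < k)%N -> (0 < m)%N -> zm R k <= xm R m.
Proof.
move=> k0 m0; apply: ereal_sup_le => _ [a [d [f [x [feas ->]]]]].
have := lp_feasible_replicate m0 feas.
rewrite mulnC => -[a1 [d1 [f1 [x1 [feas1 <-]]]]].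
have [a2 [d2 [f2 [x2 [feas2 <-]]]]] := lp_feasible_aggregate k0 feas1.
by exists a2, d2, f2, x2.
Qed.

Lemma zm_ge0 (R : realType) (k : nat) : 0 <= zm R k.
Proof.
apply: ereal_sup_ubound; exists (fun=> 0%R), (fun=> 0%R), 0%R, (fun _ _ => 0%R).
split; last by rewrite big1.
by split; split => //= *; rewrite ?big1 ?addr0 ?subr0 ?add0r ?ler01.
Qed.

Lemma xm_le5 (R : realType) (n : nat) : xm R (n.+1 + n.+1) <= 5%:E.
Proof.
apply: ge_ereal_sup => _ [a [d [f [x [feas ->]]]]].
by rewrite lee_fin; exact: lp_objective_le5 feas.
Qed.

Lemma xm_le_ratio_zm (R : realType) (n : nat) (s : R) :
  zm R (n.+1 + n.+1) <= s%:E ->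
  xm R (n.+1 + n.+1) <= (n.+3%:R / n.+1%:R * s)%:E.
Proof.
move=> zm_le; apply: ge_ereal_sup => _ [a [d [f [x [feas ->]]]]].
have [a' [d' [f' [x' [feas' sum_a']]]]] := lp_feasible_halves_diag feas.
have : (n.+1%:R / n.+3%:R * \sum_j a j)%:E <= s%:E.
  apply: le_trans _ zm_le; apply: ereal_sup_ubound.
  by exists a', d', f', x'; rewrite sum_a'.
have n1_gt0 : (0 < n.+1%:R :> R)%R by rewrite ltr0n.
have n3_gt0 : (0 < n.+3%:R :> R)%R by rewrite ltr0n.
rewrite !lee_fin mulrAC ler_pdivrMr // => H.
by rewrite mulrAC ler_pdivlMr // mulrC (mulrC n.+3%:R).
Qed.

Theorem theorem1 (R : realType) :
  ereal_sup [set zm R k | k in [set k : nat | (0 < k)%N]] =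
  ereal_inf [set xm R k | k in [set k : nat | (0 < k)%N]].
Proof.
set S := ereal_sup _; set I := ereal_inf _.
have S_le_I : S <= I.
  apply: ge_ereal_sup => _ [k k0 <-]; apply: le_ereal_inf_tmp => _ [m m0 <-].
  exact: zm_le_xm.
have I_le5 : I <= 5%:E.
  by apply: le_trans (ereal_inf_lbound _) (xm_le5 R 0); exists 2%N.
have S_ge0 : 0 <= S.
  by apply: le_trans (zm_ge0 R 1) (ereal_sup_ubound _); exists 1%N.
have [s S_s] : exists s : R, S = s%:E.
  exists (fine S); rewrite fineK // ge0_fin_numE //.
  by apply: le_lt_trans (le_trans S_le_I I_le5) _; rewrite ltry.
apply: le_anti; rewrite S_le_I /=; apply/lee_addgt0Pr => e e0.
have s0 : (0 <= s)%R by rewrite -lee_fin -S_s.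
have [n ratio_le] := ex_ratio_le_addr s0 e0.
apply: le_trans (ereal_inf_lbound _) _; first by exists (n.+1 + n.+1)%N.
apply: le_trans (@xm_le_ratio_zm R n s _) _.
  by rewrite -S_s; apply: ereal_sup_ubound; exists (n.+1 + n.+1)%N.
by rewrite S_s -EFinD lee_fin.
Qed.
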